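(* There are first-order formulas $\varphi_{\mathrm{same\text{-}col}}(x,y)$, $\varphi_{\mathrm{same\text{-}row}}(x,y)$, $\varphi_q(x,y)$ and $\varphi_{rc}(x,y)$ over two binary relation symbols $<$ and $\lhd$ such that for every $n\in\mathbb{N}$ and all $a,b\in[n]$, in the structure $([n],<^n,\lhd^n)$: $\varphi_{\mathrm{same\text{-}col}}(a,b)$ holds iff $c(a)=c(b)$; $\varphi_{\mathrm{same\text{-}row}}(a,b)$ holds iff $r(a)=r(b)$; $\varphi_q(a,b)$ holds iff $q(a)=b$; and $\varphi_{rc}(a,b)$ holds iff $r(a)=c(b)$.
   Context: $[n]=\{0,1,\dots,n\}$; $<$ is the usual order on $\mathbb{N}$ and $P^n=P\cap[n]^2$ for a binary relation $P$ on $\mathbb{N}$. Let $q_i=\frac{i(i+1)}{2}$. For $x\in\mathbb{N}$ let $c(x)=\max\{i: q_i\le x\}$, $q(x)=q_{c(x)}$, $r(x)=x-q(x)$. The linear order $\lhd$ on $\mathbb{N}$: $x\lhd y$ iff $r(x)<r(y)$, or $r(x)=r(y)$ and $c(x)<c(y)$. *)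

From mathcomp Require Import all_boot.
Set Implicit Arguments. Unset Strict Implicit. Unset Printing Implicit Defensive.

Definition qi (i : nat) : nat := (i * i.+1) %/ 2.

(* c(x) = max { i : q_i <= x }  (any such i satisfies i <= q_i <= x) *)
Definition cc (x : nat) : nat := \max_(i < x.+1 | qi i <= x) i.
Definition qq (x : nat) : nat := qi (cc x).
Definition rr (x : nat) : nat := x - qq x.

Definition lhd (x y : nat) : bool :=
  (rr x < rr y) || ((rr x == rr y) && (cc x < cc y)).

Definition restr (n : nat) (P : nat -> nat -> bool) (x y : nat) : Prop :=
  [/\ P x y, x <= n & y <= n].

(* First-order formulas over two binary relation symbols R1 (<) and R2 (<|),
   with equality; variables are natural numbers. *)
Inductive form : Type :=
  | FEq  : nat -> nat -> form
  | FR1  : nat -> nat -> form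
  | FR2  : nat -> nat -> form
  | FNot : form -> form
  | FAnd : form -> form -> form
  | FEx  : nat -> form -> form.

Definition upd (e : nat -> nat) (v a : nat) : nat -> nat :=
  fun k => if k == v then a else e k.

Fixpoint sat (n : nat) (R1 R2 : nat -> nat -> Prop) (e : nat -> nat)
    (phi : form) : Prop :=
  match phi with
  | FEq i j => e i = e j
  | FR1 i j => R1 (e i) (e j)
  | FR2 i j => R2 (e i) (e j)
  | FNot f => ~ sat n R1 R2 e f
  | FAnd f g => sat n R1 R2 e f /\ sat n R1 R2 e g
  | FEx v f => exists a, a <= n /\ sat n R1 R2 (upd e v a) f
  end.

Definition satN (n : nat) (e : nat -> nat) (phi : form) : Prop :=
  sat n (restr n (fun x y => x < y)) (restr n lhd) e phi.

From mathcomp Require Import all_boot zify.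
From Stdlib Require Import Classical.

(* Write x = q_c + r with r <= c, so that c(x) = c and r(x) = r: the numbers
   are laid out in columns, column c being the interval [q_c, q_c + c]. Then <
   is the lexicographic order on (c, r) and <| the lexicographic order on (r, c).
   The two orders agree exactly on the intervals lying inside one column, which
   defines "same column"; x < y lie in one row iff every point below y in its
   column <|-precedes x; the diagonal points r = c are the <|-least points of
   their rows; q(a) is the least point of the column of a; and r(a) = c(b) iff
   the diagonal point of the row of a lies in the column of b. *)

Set Implicit Arguments.
Unset Strict Implicit.

Lemma qiS c : qi c.+1 = qi c + c.+1.
Proof.
rewrite /qi; have -> : c.+1 * c.+2 = c * c.+1 + c.+1 * 2 by nia.
by rewrite divnDr ?dvdn_mull // mulnK.
Qed.

Lemma leq_qi : {homo qi : i j / i <= j}.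
Proof. by move=> i j ij; rewrite /qi leq_div2r // leq_mul. Qed.

Lemma leq_id_qi i : i <= qi i.
Proof. by elim: i => // i IHi; rewrite qiS; lia. Qed.

Lemma leq_qi_cc x : qi (cc x) <= x.
Proof.
apply: (big_ind (fun m => qi m <= x)) => // i j.
by rewrite /maxn; case: ifP.
Qed.

Lemma leq_cc x i : qi i <= x -> i <= cc x.
Proof.
move=> qix; have ix : i < x.+1 by have := leq_id_qi i; lia.
exact: (@leq_bigmax_cond _ (fun j : 'I_x.+1 => qi j <= x) val (Ordinal ix)).
Qed.

Lemma ltn_qi_ccS x : x < qi (cc x).+1.
Proof. by rewrite ltnNge; apply/negP => /leq_cc; lia. Qed.

Lemma leq_rr_cc x : rr x <= cc x.
Proof. by rewrite /rr /qq; have := ltn_qi_ccS x; rewrite qiS; lia. Qed.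

Lemma qi_cc_rr x : qi (cc x) + rr x = x.
Proof. by rewrite /rr /qq; have := leq_qi_cc x; lia. Qed.

Lemma cc_qiD c r : r <= c -> cc (qi c + r) = c.
Proof.
move=> rc; apply/eqP; rewrite eqn_leq leq_cc ?leq_addr // andbT.
apply: contraT; rewrite -ltnNge => /leq_qi.
by have := leq_qi_cc (qi c + r); rewrite qiS; lia.
Qed.

Lemma rr_qiD c r : r <= c -> rr (qi c + r) = r.
Proof. by move=> rc; rewrite /rr /qq cc_qiD //; lia. Qed.

Lemma ltn_cc x y : cc x < cc y -> x < y.
Proof.
move=> /leq_qi; have := ltn_qi_ccS x; have := leq_qi_cc y; lia.
Qed.

Lemma ltn_lex x y : (x < y) = (cc x < cc y) || (cc x == cc y) && (rr x < rr y).
Proof.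
case: (ltngtP (cc x) (cc y)) => [/ltn_cc -> // | /ltn_cc yx | cxy] /=.
- by rewrite ltnNge ltnW.
- by rewrite -{1}(qi_cc_rr x) -{1}(qi_cc_rr y) cxy ltn_add2l.
Qed.

Lemma leq_lex x y : (x <= y) = (cc x < cc y) || (cc x == cc y) && (rr x <= rr y).
Proof. by rewrite leqNgt ltn_lex; lia. Qed.

Lemma cc_gt0 x : 0 < x -> 0 < cc x.
Proof.
by have := qi_cc_rr x; have := leq_rr_cc x; case: (cc x) => // r0 <-; rewrite /qi /=; lia.
Qed.

Lemma cc_rr_pred y : 0 < rr y -> cc y.-1 = cc y /\ rr y.-1 = (rr y).-1.
Proof.
move=> ry; have -> : y.-1 = qi (cc y) + (rr y).-1 by have := qi_cc_rr y; lia.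
by have := leq_rr_cc y; split; [apply: cc_qiD | apply: rr_qiD]; lia.
Qed.

Definition FOr f g := FNot (FAnd (FNot f) (FNot g)).
Definition FImp f g := FNot (FAnd f (FNot g)).
Definition FAll v f := FNot (FEx v (FNot f)).
Definition FLe x y := FNot (FR1 y x).

Section Satisfaction.
Variables (n : nat) (e : nat -> nat).

Lemma satN_and f g : satN n e (FAnd f g) <-> satN n e f /\ satN n e g.
Proof. by []. Qed.
Lemma satN_not f : satN n e (FNot f) <-> ~ satN n e f.
Proof. by []. Qed.
Lemma satN_eq x y : satN n e (FEq x y) <-> e x = e y.
Proof. by []. Qed.
Lemma satN_lt x y : satN n e (FR1 x y) <-> [/\ e x < e y, e x <= n & e y <= n].
Proof. by []. Qed.
Lemma satN_lhd x y : satN n e (FR2 x y) <-> [/\ lhd (e x) (e y), e x <= n & e y <= n].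
Proof. by []. Qed.
Lemma satN_ex v f : satN n e (FEx v f) <-> exists2 a, a <= n & satN n (upd e v a) f.
Proof. by split=> [[a []]|[a]]; exists a. Qed.

Lemma satN_le x y : e x <= n -> e y <= n -> satN n e (FLe x y) <-> e x <= e y.
Proof.
move=> xn yn; rewrite satN_not satN_lt; split=> [yx | xy [yx _ _]]; last lia.
by rewrite leqNgt; apply/negP => lt; apply: yx.
Qed.

Lemma satN_or f g : satN n e (FOr f g) <-> satN n e f \/ satN n e g.
Proof. by rewrite /FOr !satN_not satN_and !satN_not; have := classic (satN n e f); tauto. Qed.

Lemma satN_imp f g : satN n e (FImp f g) <-> (satN n e f -> satN n e g).
Proof. by rewrite /FImp satN_not satN_and satN_not; have := classic (satN n e g); tauto. Qed.

Lemma satN_all v f : satN n e (FAll v f) <-> forall a, a <= n -> satN n (upd e v a) f.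
Proof.
rewrite /FAll satN_not satN_ex; split=> [nex a an | all [a an nf]]; last exact: nf (all a an).
by apply: NNPP => nf; apply: nex; exists a.
Qed.

End Satisfaction.

Lemma upd_eq e v a : upd e v a v = a.
Proof. by rewrite /upd eqxx. Qed.

Lemma upd_lt e v a x : x < v -> upd e v a x = e x.
Proof. by rewrite /upd => /ltn_eqF ->. Qed.

Lemma lhd_same_row x y : rr x = rr y -> lhd x y = (x < y).
Proof. by move=> rxy; rewrite /lhd (ltn_lex x y) rxy ltnn eqxx andbF !orbF. Qed.

Lemma orders_agree_same_col x y : 0 < x -> x <= y ->
  (forall w z, x <= w -> w < z -> z <= y -> lhd w z) <-> cc x = cc y.
Proof.
move=> x0 xy; split=> [agree | cxy w z xw wz zy]; last first.
  have := leq_lex x w; have := leq_lex z y; have := ltn_lex w z.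
  by rewrite xw wz zy /lhd; lia.
apply/eqP; apply: contraT => cxy.
have {}cxy : cc x < cc y by move: xy; rewrite leq_lex; lia.
have := agree (qi (cc x) + cc x) (qi (cc x).+1 + 0).
have := leq_qi cxy; have := leq_qi_cc y; have := leq_rr_cc x; have := cc_gt0 x0.
rewrite /lhd (leq_lex x) !cc_qiD // !rr_qiD // qiS; lia.
Qed.

Lemma col_below_same_row x y : x < y -> lhd x y ->
  (forall z, cc z = cc y -> z < y -> lhd z x) <-> rr x = rr y.
Proof.
move=> xy lxy; split=> [below | rxy z czy zy]; last first.
  by move: zy; rewrite /lhd ltn_lex czy rxy; lia.
apply/eqP; apply: contraT => rxy.
have ry : 0 < rr y by move: lxy; rewrite /lhd; lia.
have [cyp ryp] := cc_rr_pred ry.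
have y0 : 0 < y by have := qi_cc_rr y; lia.
have := below y.-1 cyp; rewrite /lhd ryp.
by move: xy lxy; rewrite ltn_lex /lhd; lia.
Qed.

Lemma lhd_min_in_row d : (forall z, rr z = rr d -> ~~ lhd z d) <-> rr d = cc d.
Proof.
split=> [minimal | rdd z rzd]; last first.
  by rewrite /lhd rzd; have := leq_rr_cc z; lia.
apply/eqP; apply: contraT => rdd.
have rd : rr d <= (cc d).-1 by have := leq_rr_cc d; lia.
have := minimal (qi (cc d).-1 + rr d).
by rewrite /lhd rr_qiD // cc_qiD //; lia.
Qed.

Lemma first_in_col y : (forall z, cc z = cc y -> y <= z) <-> rr y = 0.
Proof.
split=> [first | ry0 z czy]; last by rewrite leq_lex czy ry0; lia.
apply/eqP; apply: contraT; rewrite -lt0n => ry.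
have [cyp _] := cc_rr_pred ry.
have y0 : 0 < y by have := qi_cc_rr y; lia.
by have := first _ cyp; lia.
Qed.

Lemma qq_eq x y : qq x = y <-> cc x = cc y /\ rr y = 0.
Proof.
split=> [<- | [cxy ry0]].
  by rewrite /qq -(addn0 (qi _)) cc_qiD // rr_qiD.
by rewrite /qq cxy; have := qi_cc_rr y; lia.
Qed.

Ltac upd_simpl := repeat (rewrite upd_eq || (rewrite upd_lt; last by lia)).

(* A builder with parameter [k] has its free variables below [k] and binds only
   [k], [k.+1], ..., so builders nest without variable capture. *)
Definition orders_agree k x y :=
  FAll k (FAll k.+1 (FImp (FAnd (FLe x k) (FAnd (FR1 k k.+1) (FLe k.+1 y))) (FR2 k k.+1))).

Lemma sat_orders_agree n e k x y : x < k -> y < k -> e x <= n -> e y <= n ->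
  satN n e (orders_agree k x y) <-> forall w z, e x <= w -> w < z -> z <= e y -> lhd w z.
Proof.
move=> xk yk xn yn; rewrite satN_all.
have sat_body w z : w <= n -> z <= n ->
    satN n (upd (upd e k w) k.+1 z)
      (FImp (FAnd (FLe x k) (FAnd (FR1 k k.+1) (FLe k.+1 y))) (FR2 k k.+1)) <->
    (e x <= w -> w < z -> z <= e y -> lhd w z).
  move=> wn zn; rewrite satN_imp !satN_and satN_lt satN_lhd !satN_le; upd_simpl; try done.
  split=> [body xw wz zy | body [xw [[wz _ _] zy]]]; last by split; [apply: body | |].
  by case: body.
split=> [agree w z xw wz zy | agree w wn]; last first.
  by rewrite satN_all => z zn; apply/sat_body => //; apply: agree.
have zn : z <= n by lia.
have wn : w <= n by lia.
by move: (agree w wn); rewrite satN_all => /(_ z zn) /sat_body; apply.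
Qed.

(* The point below [x] excludes [x = 0]: the orders also agree on [0, 2],
   which meets the columns {0} and {1, 2}. *)
Definition same_col_lt k x y := FAnd (FR1 x y) (FAnd (FEx k (FR1 k x)) (orders_agree k x y)).

Lemma sat_same_col_lt n e k x y : x < k -> y < k -> e x <= n -> e y <= n ->
  satN n e (same_col_lt k x y) <-> e x < e y /\ cc (e x) = cc (e y).
Proof.
move=> xk yk xn yn.
have pos : (exists2 w, w <= n & satN n (upd e k w) (FR1 k x)) <-> 0 < e x.
  split=> [[w _] | x0]; rewrite ?satN_lt; upd_simpl; first by case; lia.
  by exists 0; rewrite ?satN_lt; upd_simpl.
rewrite satN_and satN_lt satN_and satN_ex pos sat_orders_agree //.
split=> [[[xy _ _] [x0 agree]] | [xy cxy]].
  by split=> //; apply/orders_agree_same_col => //; apply: ltnW.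
have x0 : 0 < e x.
  move: xy; rewrite ltn_lex cxy ltnn eqxx /= => rxy.
  by have := leq_rr_cc (e y); have := leq_id_qi (cc (e x)); have := leq_qi_cc (e x); lia.
by split=> //; split=> //; apply/orders_agree_same_col => //; apply: ltnW.
Qed.

Definition refl_sym_closure (phi : nat -> nat -> form) x y :=
  FOr (FEq x y) (FOr (phi x y) (phi y x)).

Lemma sat_refl_sym_closure n e phi (f : nat -> nat) x y :
  (satN n e (phi x y) <-> e x < e y /\ f (e x) = f (e y)) ->
  (satN n e (phi y x) <-> e y < e x /\ f (e y) = f (e x)) ->
  satN n e (refl_sym_closure phi x y) <-> f (e x) = f (e y).
Proof.
move=> sxy syx; rewrite satN_or satN_eq satN_or sxy syx.
split=> [[-> | [[_ ->] | [_ ->]]] // | fxy].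
by case: (ltngtP (e x) (e y)) => [xy | yx | ->]; [right; left | right; right | left].
Qed.

Definition same_col k := refl_sym_closure (same_col_lt k).

Lemma sat_same_col n e k x y : x < k -> y < k -> e x <= n -> e y <= n ->
  satN n e (same_col k x y) <-> cc (e x) = cc (e y).
Proof. by move=> *; apply: sat_refl_sym_closure; apply: sat_same_col_lt. Qed.

Definition same_row_lt k x y :=
  FAnd (FR1 x y) (FAnd (FR2 x y) (FAll k (FImp (FAnd (same_col k.+1 k y) (FR1 k y)) (FR2 k x)))).

Lemma sat_same_row_lt n e k x y : x < k -> y < k -> e x <= n -> e y <= n ->
  satN n e (same_row_lt k x y) <-> e x < e y /\ rr (e x) = rr (e y).
Proof.
move=> xk yk xn yn.
have sat_body z : z <= n ->
    satN n (upd e k z) (FImp (FAnd (same_col k.+1 k y) (FR1 k y)) (FR2 k x)) <->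
    (cc z = cc (e y) -> z < e y -> lhd z (e x)).
  move=> zn; rewrite satN_imp satN_and sat_same_col ?satN_lt ?satN_lhd; upd_simpl; try lia.
  by split=> [body czy zy | body [czy [zy _ _]]]; [case: body | split=> //; exact: body czy zy].
rewrite satN_and satN_lt satN_and satN_lhd satN_all.
split=> [[[xy _ _] [[lxy _ _] below]] | [xy rxy]].
  split=> //; apply: (proj1 (col_below_same_row xy lxy)) => z czy zy.
  have zn : z <= n by lia.
  by move/(sat_body z zn): (below z zn); apply.
have lxy : lhd (e x) (e y) by rewrite lhd_same_row.
split=> //; split=> // z zn; apply/sat_body => //.
by move: z {zn}; apply: (proj2 (col_below_same_row xy lxy)).
Qed.

Definition same_row k := refl_sym_closure (same_row_lt k).

Lemma sat_same_row n e k x y : x < k -> y < k -> e x <= n -> e y <= n ->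
  satN n e (same_row k x y) <-> rr (e x) = rr (e y).
Proof. by move=> *; apply: sat_refl_sym_closure; apply: sat_same_row_lt. Qed.

Definition on_diag k d := FNot (FEx k (FAnd (same_row k.+1 k d) (FR2 k d))).

Lemma sat_on_diag n e k d : d < k -> e d <= n ->
  satN n e (on_diag k d) <-> rr (e d) = cc (e d).
Proof.
move=> dk dn; rewrite satN_not satN_ex -lhd_min_in_row.
split=> [none z rzd | minimal [z zn]].
  apply/negP => lzd; have zn : z <= n by move: lzd; rewrite lhd_same_row //; lia.
  apply: none; exists z => //.
  by rewrite satN_and sat_same_row ?satN_lhd; upd_simpl; try lia.
rewrite satN_and sat_same_row ?satN_lhd; upd_simpl; try lia.
by case=> rzd [lzd _ _]; move: (minimal z rzd); rewrite lzd.
Qed.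

Definition is_qq k x y :=
  FAnd (same_col k x y) (FNot (FEx k (FAnd (same_col k.+1 k y) (FR1 k y)))).

Lemma sat_is_qq n e k x y : x < k -> y < k -> e x <= n -> e y <= n ->
  satN n e (is_qq k x y) <-> qq (e x) = e y.
Proof.
move=> xk yk xn yn; rewrite qq_eq -first_in_col satN_and sat_same_col // satN_not satN_ex.
suff -> : (~ exists2 z, z <= n & satN n (upd e k z) (FAnd (same_col k.+1 k y) (FR1 k y))) <->
          (forall z, cc z = cc (e y) -> e y <= z) by [].
split=> [none z czy | first [z zn]].
  rewrite leqNgt; apply/negP => zy; have zn : z <= n by lia.
  apply: none; exists z => //.
  by rewrite satN_and sat_same_col ?satN_lt; upd_simpl; try lia.
rewrite satN_and sat_same_col ?satN_lt; upd_simpl; try lia.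
by case=> czy [zy _ _]; have := first z czy; lia.
Qed.

Lemma leq_diag_rr x : qi (rr x) + rr x <= x.
Proof. by rewrite (leq_lex _ x) cc_qiD // rr_qiD //; have := leq_rr_cc x; lia. Qed.

Definition rr_is_cc k x y :=
  FEx k (FAnd (same_row k.+1 x k) (FAnd (same_col k.+1 k y) (on_diag k.+1 k))).

Lemma sat_rr_is_cc n e k x y : x < k -> y < k -> e x <= n -> e y <= n ->
  satN n e (rr_is_cc k x y) <-> rr (e x) = cc (e y).
Proof.
move=> xk yk xn yn; rewrite satN_ex; split=> [[d dn] | rxy].
  by rewrite !satN_and sat_same_row ?sat_same_col ?sat_on_diag; upd_simpl; try lia.
have dx := leq_diag_rr (e x); exists (qi (rr (e x)) + rr (e x)); first lia.
rewrite !satN_and sat_same_row ?sat_same_col ?sat_on_diag; upd_simpl; try lia.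
by rewrite cc_qiD // rr_qiD.
Qed.

Theorem lemma3p3 :
  exists phi_col phi_row phi_q phi_rc : form,
    forall (n a b : nat) (e : nat -> nat),
      a <= n -> b <= n -> e 0 = a -> e 1 = b ->
      [/\ satN n e phi_col <-> cc a = cc b,
          satN n e phi_row <-> rr a = rr b,
          satN n e phi_q <-> qq a = b
        & satN n e phi_rc <-> rr a = cc b].
Proof.
exists (same_col 2 0 1), (same_row 2 0 1), (is_qq 2 0 1), (rr_is_cc 2 0 1).
move=> n a b e an bn ea eb; subst a b.
split; [exact: sat_same_col | exact: sat_same_row | exact: sat_is_qq | exact: sat_rr_is_cc].
Qed.
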